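(* Let $p,q$ be primes with $p>2$, $q>p$, $q\ge 5$, $p\mid q-1$, $p\nmid q+1$, $p^2\nmid q-1$. Let $\lambda$ be a fixed generator of the unique subgroup of order $p$ of $(\mathbf Z/(q))^*$. Then a system of representatives of the conjugacy classes of subgroups of order $p$ of $\mathrm{GL}(2,q)$ is $$\left\langle \begin{pmatrix}1&0\\0&\lambda\end{pmatrix}\right\rangle,\ \left\langle \begin{pmatrix}\lambda&0\\0&\lambda\end{pmatrix}\right\rangle,\ \left\langle \begin{pmatrix}\lambda&0\\0&\lambda^{-1}\end{pmatrix}\right\rangle,\ \left\langle \begin{pmatrix}\lambda&0\\0&\lambda^{k}\end{pmatrix}\right\rangle,$$ where $k$ runs over a system of representatives of the elements of $(\mathbf Z/(p))^*\setminus\{1,-1\}$ under the equivalence relation $k\sim l$ if and only if $kl\equiv 1\pmod p$. In particular, the number of conjugacy classes of subgroups of order $p$ of $\mathrm{GL}(2,q)$ is $(p+3)/2$. *)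

From mathcomp Require Import all_boot all_order all_algebra all_fingroup.
Set Implicit Arguments. Unset Strict Implicit. Unset Printing Implicit Defensive.
Import GRing.Theory.

Local Open Scope group_scope.

(* The diagonal matrix diag(a, b) with a, b units of F_q, as an element of
   GL(2, q).  It is invertible (det = a b), so [insubd 1] returns it. *)
Definition diagGL (q : nat) (a b : {unit 'F_q}) : {'GL_2(q)} :=
  insubd (1 : {'GL_2(q)})
    (\matrix_(i < 2, j < 2) (if i == j then
        (if (i : nat) == 0%N then val a else val b) else 0%R))%R.

Definition subgroups_of_order (gT : finGroupType) (n : nat) : {set {set gT}} :=
  [set H : {set gT} | group_set H && (#|H| == n)].

Definition subgroup_classes_of_order (gT : finGroupType) (n : nat)
  : {set {set {set gT}}} :=
  [set H :^: [set: gT] | H in subgroups_of_order gT n].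

(* A list L of subsets is a system of representatives of the conjugacy
   classes of subgroups of order n: every member is a subgroup of order n,
   and every subgroup of order n is conjugate to exactly one entry of L
   (counted with position, so the entries are pairwise non-conjugate). *)
Definition conj_class_reps (gT : finGroupType) (n : nat) (L : seq {set gT}) : Prop :=
  (forall K, K \in L -> K \in subgroups_of_order gT n) /\
  (forall H, H \in subgroups_of_order gT n ->
     count (fun K => H \in K :^: [set: gT]) L = 1%N).

(* The equivalence relation on (Z/p)^* \ {1,-1}: k ~ l iff k = l or k l = 1 mod p
   (the reflexive closure of the relation stated in the paper, which is already
   symmetric). *)
Definition inv_rel (p : nat) (k l : 'I_p) : bool :=
  (k == l) || ((k * l) %% p == 1%N).

(* (Z/p)^* \ {1,-1}, i.e. the residues 2, ..., p-2. *)
Definition units_minus_pm1 (p : nat) : {set 'I_p} :=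
  [set k : 'I_p | (1 < k)%N && (k < p.-1)%N].

Definition inv_reps (p : nat) (S : {set 'I_p}) : Prop :=
  S \subset units_minus_pm1 p /\
  (forall k, k \in units_minus_pm1 p -> #|[set s in S | inv_rel s k]| = 1%N).

From mathcomp Require Import all_boot all_order all_algebra all_fingroup all_solvable.
From mathcomp Require Import zify ring.
Set Implicit Arguments. Unset Strict Implicit. Unset Printing Implicit Defensive.
Import GRing.Theory.

(* Since p^2 exactly divides #|GL(2,q)| = q (q-1)^2 (q+1), the diagonal subgroup
   <l> x <l> is a Sylow p-subgroup, so every subgroup of order p is conjugate to
   some <diag(l^z, l^w)> with (z, w) <> (0, 0) in (Z/p)^2.  Conjugate diagonal
   matrices have the same eigenvalues, so two such subgroups are conjugate exactly
   when (z', w') is a nonzero multiple of (z, w) or of (w, z).  Up to this relation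
   a nonzero pair is (0, 1) or (1, x), with x determined up to inversion; the
   classes of (Z/p)^* under x ~ x^-1 are {1}, {-1} and (p - 3)/2 pairs {k, k^-1}. *)

Local Open Scope ring_scope.

Section DiagonalMatrices.
Variable R : comUnitRingType.

Definition diag2_mx (a b : R) : 'M[R]_2 :=
  \matrix_(i < 2, j < 2) (if i == j then (if (i : nat) == 0%N then a else b) else 0).

Lemma diag2_mxE a b :
  diag2_mx a b = diag_mx (\row_(j < 2) (if (j : nat) == 0%N then a else b)).
Proof.
by apply/matrixP=> i j; rewrite !mxE; case: eqP => [->|]; rewrite ?mulr1n ?mulr0n.
Qed.

Lemma det_diag2_mx a b : \det (diag2_mx a b) = a * b.
Proof. by rewrite diag2_mxE det_diag !big_ord_recl big_ord0 !mxE /= mulr1. Qed.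

Lemma mxtrace_diag2_mx a b : \tr (diag2_mx a b) = a + b.
Proof. by rewrite /mxtrace !big_ord_recl big_ord0 !mxE /= addr0. Qed.

Lemma mul_diag2_mx a b c d : diag2_mx a b *m diag2_mx c d = diag2_mx (a * c) (b * d).
Proof.
rewrite !diag2_mxE mulmx_diag; congr diag_mx.
by apply/rowP => j; rewrite !mxE; case: ifP.
Qed.

Definition antidiag2_mx : 'M[R]_2 := \matrix_(i < 2, j < 2) (if i == j then 0 else 1).

Lemma antidiag2_mx_unit : antidiag2_mx \in unitmx.
Proof.
rewrite unitmxE (expand_det_row _ ord0) !big_ord_recl big_ord0 /cofactor !mxE /=.
by rewrite !det_mx11 !mxE /= !mul0r !mul1r add0r addr0 expr1 mulr1 unitrN1.
Qed.

Lemma antidiag2_mx_comm a b : antidiag2_mx *m diag2_mx a b = diag2_mx b a *m antidiag2_mx.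
Proof.
apply/matrixP => i j; rewrite !mxE !big_ord_recl big_ord0 !mxE.
by case: i => [[|[|//]] ?]; case: j => [[|[|//]] ?];
  rewrite /= ?big_ord0 ?mul0r ?mulr0 ?mul1r ?mulr1 ?addr0 ?add0r.
Qed.

End DiagonalMatrices.

Section GLConjugation.
Variables (R : finComUnitRingType) (n : nat).

Lemma mxtrace_conjGL (x g : {'GL_n[R]}) : \tr (GLval (x ^ g)%g) = \tr (GLval x).
Proof.
rewrite conjgE !GL_MxE GL_VxE mulmxA mxtrace_mulC mulmxA mulmxV ?mul1mx //.
exact: GL_unitmx.
Qed.

Lemma det_conjGL (x g : {'GL_n[R]}) : \det (GLval (x ^ g)%g) = \det (GLval x).
Proof.
rewrite conjgE !GL_MxE GL_VxE !det_mulmx det_inv mulrA mulrC mulrA mulrV ?mul1r //.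
by rewrite -unitmxE; apply: GL_unitmx.
Qed.

End GLConjugation.

Section DiagonalGL.
Variable F : finFieldType.
Implicit Types a b c d : {unit F}.
Local Open Scope group_scope.

Definition diag2_GL a b : {'GL_2[F]} := insubd (1 : {'GL_2[F]}) (diag2_mx (val a) (val b)).

Lemma diag2_GLE a b : GLval (diag2_GL a b) = diag2_mx (val a) (val b).
Proof.
by rewrite insubdK // unitmxE det_diag2_mx unitrM; apply/andP; split; apply: valP.
Qed.

Lemma diag2_GLM a b c d : diag2_GL a b * diag2_GL c d = diag2_GL (a * c) (b * d).
Proof.
apply: val_inj.
change (GLval (diag2_GL a b * diag2_GL c d) = GLval (diag2_GL (a * c) (b * d))).
by rewrite GL_MxE !diag2_GLE mul_diag2_mx !FinRing.val_unitM.
Qed.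

Lemma diag2_GL1 : diag2_GL 1 1 = 1.
Proof.
apply: val_inj; change (GLval (diag2_GL 1 1) = GLval 1); rewrite diag2_GLE GL_1E.
by apply/matrixP => i j; rewrite !mxE; case: (i == j) => //; case: ifP.
Qed.

Lemma diag2_GLX a b m : diag2_GL a b ^+ m = diag2_GL (a ^+ m) (b ^+ m).
Proof. by elim: m => [|m IHm]; rewrite ?diag2_GL1 // !expgS IHm diag2_GLM. Qed.

Lemma diag2_GL_inj a b c d : diag2_GL a b = diag2_GL c d -> a = c /\ b = d.
Proof.
move/(congr1 GLval); rewrite !diag2_GLE => /matrixP E.
have := E ord0 ord0; have := E ord_max ord_max; rewrite !mxE /= => ? ?.
by split; apply: val_inj.
Qed.

Lemma diag2_GL_eq1 a b : (diag2_GL a b == 1) = (a == 1) && (b == 1).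
Proof.
apply/eqP/andP => [|[/eqP -> /eqP ->]]; last exact: diag2_GL1.
by rewrite -diag2_GL1 => /diag2_GL_inj[-> ->].
Qed.

Definition antidiag2_GL : {'GL_2[F]} := insubd (1 : {'GL_2[F]}) (antidiag2_mx F).

Lemma conjg_diag2_GL_antidiag a b : diag2_GL a b ^ antidiag2_GL = diag2_GL b a.
Proof.
suff E : diag2_GL a b * antidiag2_GL = antidiag2_GL * diag2_GL b a.
  by rewrite conjgE E mulKg.
apply: val_inj.
change (GLval (diag2_GL a b * antidiag2_GL) = GLval (antidiag2_GL * diag2_GL b a)).
by rewrite !GL_MxE !diag2_GLE insubdK ?antidiag2_mx_unit // antidiag2_mx_comm.
Qed.

Lemma diag2_GL_conj a b c d g :
  diag2_GL a b ^ g = diag2_GL c d -> (c = a /\ d = b) \/ (c = b /\ d = a).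
Proof.
move=> E; have := mxtrace_conjGL (diag2_GL a b) g; have := det_conjGL (diag2_GL a b) g.
rewrite E !diag2_GLE !det_diag2_mx !mxtrace_diag2_mx => Edet Etr.
(* c is a root of (X - a)(X - b), as c + d = a + b and c d = a b. *)
have : ((val c - val a) * (val c - val b) = 0)%R.
  have -> : ((val c - val a) * (val c - val b)
            = val c * val c - val c * (val a + val b) + val a * val b)%R by ring.
  by rewrite -Etr -Edet; ring.
move/eqP; rewrite mulf_eq0 !subr_eq0 => /orP[] /eqP Ec; [left | right];
  split; apply: val_inj => //; apply: (addrI (val c : F)); by rewrite Etr Ec // addrC.
Qed.

End DiagonalGL.

Definition pair_equiv (R : nzRingType) (u v : R * R) : Prop :=
  exists c, v = (u.1 * c, u.2 * c) \/ v = (u.2 * c, u.1 * c).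

Lemma pair_equiv_1 (R : nzRingType) (x y : R) :
  pair_equiv (1, x) (1, y) -> y = x \/ x * y = 1.
Proof.
case=> c /= [] [c1 ->]; [left | right]; first by rewrite -[c]mul1r -c1 mulr1.
by rewrite mul1r.
Qed.

Section PrimeResidues.
Variable n : nat.
Local Notation p := n.+2.
Hypothesis p_pr : prime p.

Lemma Zp_unit_neq0 (z : 'I_p) : z != 0 -> z \is a GRing.unit.
Proof.
move=> nz; have := @unitZpE p z isT; rewrite natr_Zp => ->.
rewrite prime_coprime // gtnNdvd //.
by rewrite lt0n; apply: contra nz => /eqP z0; apply/eqP/val_inj.
Qed.

Lemma Zp_sqr_eq1 (k : 'I_p) : k * k = 1 -> k = 1 \/ k = -1.
Proof.
move=> kk; case: (eqVneq k 1) => [|k_neq1]; [by left | right].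
have u : k - 1 \is a GRing.unit by apply: Zp_unit_neq0; rewrite subr_eq0.
have e : (k - 1) * (k + 1) = (k - 1) * 0.
  by rewrite mulr0; transitivity (k * k - 1); [ring | rewrite kk subrr].
by apply/eqP; rewrite -addr_eq0 (mulrI u e).
Qed.

Lemma val_Zp_opp1 : val (-1 : 'I_p) = p.-1.
Proof. by rewrite /= modn_small // subSS subn0 modn_small. Qed.

Lemma in_units_minus_pm1 (k : 'I_p) :
  (k \in units_minus_pm1 p) = [&& k != 0, k != 1 & k != -1].
Proof. by rewrite inE -!val_eqE val_Zp_opp1 /= modn_small //; have := ltn_ord k; lia. Qed.

Lemma units_minus_pm1_inv (k : 'I_p) :
  k \in units_minus_pm1 p -> k^-1 \in units_minus_pm1 p.
Proof.
rewrite !in_units_minus_pm1 invr_eq0 invr_eq1 => /and3P[-> -> km1] /=.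
by apply: contra km1 => /eqP h; rewrite -(invrK k) h invrN1.
Qed.

Lemma card_units_minus_pm1 : #|units_minus_pm1 p| = (p - 3)%N.
Proof.
have E : ~: units_minus_pm1 p = 0 |: [set 1; -1].
  apply/setP => k; rewrite !inE -!val_eqE val_Zp_opp1 /= modn_small //.
  by have := ltn_ord k; lia.
have := cardsC (units_minus_pm1 p); rewrite E card_ord cardsU1 cards2 !inE.
by rewrite -!val_eqE val_Zp_opp1 /= ?(@modn_small 1) //; lia.
Qed.

Lemma inv_relE (s k : 'I_p) : inv_rel s k = (s == k) || (s * k == 1).
Proof. by rewrite /inv_rel; congr (_ || _); exact: (val_eqE (s * k) 1). Qed.

Section Representatives.
Variable S : {set 'I_p}.
Hypothesis S_reps : inv_reps S.

Lemma inv_reps_units k : k \in S -> k \in units_minus_pm1 p.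
Proof. by case: S_reps => /subsetP sub _ /sub. Qed.

Lemma inv_reps_cover k : k \in units_minus_pm1 p -> exists2 s, s \in S & inv_rel s k.
Proof.
case: S_reps => _ cnt /cnt/eqP/cards1P[x Ex].
by have := set11 x; rewrite -Ex inE => /andP[xS xk]; exists x.
Qed.

Lemma inv_reps_mul_neq1 k s : k \in S -> s \in S -> k * s != 1.
Proof.
move=> kS sS; apply/negP => /eqP ks1.
case: S_reps => _ /(_ s (inv_reps_units sS))/eqP/cards1P[x Ex].
have : k \in [set t in S | inv_rel t s] by rewrite inE kS inv_relE ks1 eqxx orbT.
have : s \in [set t in S | inv_rel t s] by rewrite inE sS inv_relE eqxx.
rewrite Ex !inE => /eqP sx /eqP kx; rewrite kx -sx in ks1.
have := inv_reps_units sS; rewrite in_units_minus_pm1.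
by case: (Zp_sqr_eq1 ks1) => ->; rewrite eqxx ?andbF.
Qed.

Lemma card_inv_reps : (#|S|.*2 = p - 3)%N.
Proof.
rewrite -card_units_minus_pm1.
have unitS k : k \in S -> k \is a GRing.unit.
  by move/inv_reps_units; rewrite in_units_minus_pm1 => /and3P[/Zp_unit_neq0].
have -> : units_minus_pm1 p = S :|: [set k^-1 | k in S].
  apply/setP => k; rewrite in_setU; apply/idP/orP => [kU | [/inv_reps_units //|]].
    have [s sS] := inv_reps_cover kU; rewrite inv_relE => /orP[/eqP <-|/eqP sk1].
      by left.
    by right; apply/imsetP; exists s; rewrite // -(mulKr (unitS s sS) k) sk1 mulr1.
  by case/imsetP => s /inv_reps_units sU ->; apply: units_minus_pm1_inv.
rewrite cardsU card_imset; last exact: invr_inj.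
suff -> : S :&: [set k^-1 | k in S] = set0 by rewrite cards0 subn0 addnn.
apply/setP => k; rewrite !inE; apply/negP => /andP[kS /imsetP[s sS ks]].
by have := inv_reps_mul_neq1 kS sS; rewrite ks mulVr ?eqxx // unitS.
Qed.

Definition ratio_reps : seq 'I_p := [:: 1, -1 & enum S].

Lemma ratio_reps_neq0 x : x \in ratio_reps -> x != 0.
Proof.
rewrite !inE mem_enum => /or3P[/eqP-> | /eqP-> | /inv_reps_units].
- exact: oner_neq0.
- by rewrite oppr_eq0 oner_neq0.
- by rewrite in_units_minus_pm1 => /and3P[].
Qed.

Lemma ratio_reps_cover x : x != 0 -> exists2 y, y \in ratio_reps & y = x \/ y * x = 1.
Proof.
move=> x0; case: (eqVneq x 1) => [->|x1]; first by exists 1; [rewrite inE eqxx | left].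
case: (eqVneq x (-1)) => [->|xm1]; first by exists (-1); [rewrite !inE eqxx orbT | left].
have [|s sS] := @inv_reps_cover x; first by rewrite in_units_minus_pm1 x0 x1 xm1.
rewrite inv_relE => /orP[]/eqP sx; exists s; rewrite ?inE ?mem_enum ?sS ?orbT //.
  by left.
by right.
Qed.

Lemma ratio_reps_inv_eq x y : x \in ratio_reps -> y \in ratio_reps -> x * y = 1 -> x = y.
Proof.
rewrite !inE !mem_enum => /or3P[/eqP-> | /eqP-> | xS].
- by move=> _; rewrite mul1r.
- by move=> _; rewrite mulN1r => /eqP; rewrite eqr_oppLR => /eqP.
have := inv_reps_units xS; rewrite in_units_minus_pm1 => /and3P[_ x1 xm1].
case/or3P => [/eqP-> | /eqP-> | yS].
- by rewrite mulr1 => x1'; rewrite x1' eqxx in x1.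
- by rewrite mulrN1 => /eqP; rewrite eqr_oppLR => /eqP xm1'; rewrite xm1' eqxx in xm1.
- by move/eqP; rewrite (negbTE (inv_reps_mul_neq1 xS yS)).
Qed.

Hypothesis p_gt2 : (2 < p)%N.

Lemma ratio_reps_uniq : uniq ratio_reps.
Proof.
have notS k : k \in S -> (k != 1) && (k != -1).
  by move/inv_reps_units; rewrite in_units_minus_pm1 => /and3P[_ -> ->].
rewrite /= !inE !mem_enum enum_uniq andbT negb_or.
have -> : (1 : 'I_p) != -1 by rewrite -val_eqE val_Zp_opp1 /= ?(@modn_small 1); lia.
by apply/andP; split; apply/negP => /notS; rewrite eqxx ?andbF.
Qed.

Definition pair_reps : seq ('I_p * 'I_p) := (0, 1) :: [seq (1, x) | x <- ratio_reps].

Lemma pair_reps_neq0 u : u \in pair_reps -> u != (0, 0).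
Proof.
by rewrite inE => /orP[/eqP-> | /mapP[x _ ->]]; rewrite xpair_eqE oner_eq0 ?andbF.
Qed.

Lemma pair_reps_uniq : uniq pair_reps.
Proof.
rewrite /pair_reps cons_uniq map_inj_uniq ?ratio_reps_uniq ?andbT => [|x y [] //].
by apply/mapP => -[x _ []] /eqP; rewrite eq_sym oner_eq0.
Qed.

Lemma size_pair_reps : size pair_reps = ((p + 3) %/ 2)%N.
Proof.
rewrite /= size_map -cardE; have := card_inv_reps; rewrite -muln2 => cardS.
have -> : (p + 3 = #|S|.+3 * 2)%N by lia.
by rewrite mulnK.
Qed.

Lemma pair_equiv_cover u : u != (0, 0) -> exists2 v, v \in pair_reps & pair_equiv v u.
Proof.
case: u => z w; rewrite xpair_eqE negb_and.
have in01 : (0, 1) \in pair_reps := mem_head _ _.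
have in1 x : x \in ratio_reps -> (1, x) \in pair_reps.
  by move=> xR; rewrite inE map_f ?orbT.
case: (eqVneq z 0) => [-> _ | z0 _].
  by exists (0, 1) => //; exists w; left; rewrite mul0r mul1r.
case: (eqVneq w 0) => [-> | w0].
  by exists (0, 1) => //; exists z; right; rewrite mul0r mul1r.
have zu := Zp_unit_neq0 z0.
have [|y yR [yE | yE]] := @ratio_reps_cover (w / z).
- by apply: contra w0 => /eqP wz0; rewrite -(divrK zu w) wz0 mul0r.
- by exists (1, y); [exact: in1 | exists z; left; rewrite mul1r yE divrK].
- exists (1, y); [exact: in1 | exists w; right; rewrite mul1r].
  by rewrite -[z]mul1r -yE mulrA divrK.
Qed.

Lemma pair_equiv_rigid u v :
  u \in pair_reps -> v \in pair_reps -> pair_equiv u v -> u = v.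
Proof.
rewrite inE => /orP[/eqP-> | /mapP[x xR ->]];
  rewrite inE => /orP[/eqP-> | /mapP[y yR ->]] //.
- case=> c /= [] /eqP; rewrite xpair_eqE => /andP[/eqP e1 /eqP e2].
    by move/eqP: e1; rewrite mul0r oner_eq0.
  by have := ratio_reps_neq0 yR; rewrite e2 mul0r eqxx.
- case=> c /= [] /eqP; rewrite xpair_eqE => /andP[/eqP e0 /eqP e1].
    by move: e1; rewrite mul1r in e0; rewrite -e0 mulr0 => /eqP; rewrite oner_eq0.
  move: e0; rewrite mul1r in e1; rewrite -e1 mulr1 => x0.
  by have := ratio_reps_neq0 xR; rewrite -x0 eqxx.
- by case/pair_equiv_1 => [-> // | /(ratio_reps_inv_eq xR yR) ->].
Qed.

End Representatives.

Lemma inv_reps_exist : exists S : {set 'I_p}, inv_reps S.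
Proof.
pose S := [set k in units_minus_pm1 p | (val k < val k^-1)%N].
have memS s : (s \in S) = (s \in units_minus_pm1 p) && (val s < val s^-1)%N.
  by rewrite !inE.
exists S; split=> [|k kU]; first by apply/subsetP => k; rewrite memS => /andP[].
have ku : k \is a GRing.unit.
  by move: kU; rewrite in_units_minus_pm1 => /and3P[/Zp_unit_neq0].
have k_neq_inv : val k != val k^-1.
  apply: contraTneq kU => /val_inj kk; rewrite in_units_minus_pm1.
  have kk1 : k * k = 1 by rewrite {2}kk mulrV.
  by case: (Zp_sqr_eq1 kk1) => ->; rewrite eqxx ?andbF.
have class_k s :
    (s \in [set t in S | inv_rel t k]) = (s \in S) && ((s == k) || (s == k^-1)).
  by rewrite in_set inv_relE -[X in s * k == X](mulVr ku) (inj_eq (mulIr ku)).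
apply/eqP/cards1P; case: (ltngtP (val k) (val k^-1)) => [lt | gt | eq].
- exists k; apply/setP => s; rewrite class_k memS in_set1.
  case: (eqVneq s k) => [-> | _]; first by rewrite kU lt.
  case: (eqVneq s k^-1) => [-> | _]; last by rewrite !andbF.
  by rewrite (invrK k) ltnNge ltnW ?andbF.
- exists k^-1; apply/setP => s; rewrite class_k memS in_set1.
  case: (eqVneq s k^-1) => [-> | _].
    by rewrite units_minus_pm1_inv // (invrK k) gt orbT.
  case: (eqVneq s k) => [-> | _]; last by rewrite !andbF.
  by rewrite ltnNge ltnW ?andbF.
- by rewrite eq eqxx in k_neq_inv.
Qed.

End PrimeResidues.

Local Close Scope ring_scope.

Section ConjClassReps.
Local Open Scope group_scope.
Variables (gT : finGroupType) (n : nat) (T : finType) (s : seq T) (f : T -> {set gT}).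
Hypotheses (s_uniq : uniq s)
  (f_order : {in s, forall x, f x \in subgroups_of_order gT n})
  (f_cover : forall H, H \in subgroups_of_order gT n ->
     exists2 x, x \in s & H \in f x :^: [set: gT])
  (f_rigid : {in s &, forall x y, f x \in f y :^: [set: gT] -> x = y}).

Lemma conj_class_reps_map : conj_class_reps n (map f s).
Proof.
split=> [K /mapP[x xs ->] | H Hn]; first exact: f_order.
have [x0 x0s Hx0] := f_cover Hn.
rewrite count_map (@eq_in_count _ _ (pred1 x0)) ?count_uniq_mem ?x0s // => y ys /=.
apply/idP/eqP => [Hy | ->] //; apply: f_rigid => //.
by rewrite -orbitJs in Hy Hx0 *; apply: orbit_trans Hx0; rewrite orbit_sym.
Qed.

Lemma card_subgroup_classes_map : #|subgroup_classes_of_order gT n| = size s.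
Proof.
have -> : subgroup_classes_of_order gT n = [set f x :^: [set: gT] | x in s].
  apply/setP => C; apply/imsetP/imsetP => [[H Hn ->] | [x xs ->]].
    by have [x xs Hx] := f_cover Hn; exists x => //; rewrite -!orbitJs; apply/orbit_eqP.
  by exists (f x); rewrite ?f_order.
rewrite card_in_imset; first exact/card_uniqP.
by move=> x y xs ys Exy; apply: f_rigid; rewrite // -Exy -orbitJs orbit_refl.
Qed.

End ConjClassReps.

Section DiagonalSubgroups.
Local Open Scope group_scope.
Variables (F : finFieldType) (n : nat) (l : {unit F}).
Local Notation p := n.+2.
Hypotheses (p_pr : prime p) (l_order : #[l] = p).

Definition diag_pow (u : 'I_p * 'I_p) : {'GL_2[F]} := diag2_GL (l ^+ u.1) (l ^+ u.2).

Lemma expg_Zp_inj (z w : 'I_p) : l ^+ z = l ^+ w -> z = w.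
Proof.
move/eqP; rewrite eq_expg_mod_order l_order !modn_small // => /eqP.
exact: val_inj.
Qed.

Lemma expg_Zp_eq1 (z : 'I_p) : (l ^+ z == 1) = (z == 0%R).
Proof.
apply/eqP/eqP => [lz1 | ->]; last exact: expg0.
by apply: expg_Zp_inj; rewrite lz1 expg0.
Qed.

Lemma mem_cycle_Zp a : a \in <[l]> -> exists z : 'I_p, a = l ^+ z.
Proof.
case/cycleP => i ->; exists (inZp i).
by rewrite -[in LHS](expg_mod_order l i) l_order.
Qed.

Lemma diag_powX u m : diag_pow u ^+ m = diag_pow (u.1 * inZp m, u.2 * inZp m)%R.
Proof.
rewrite diag2_GLX -!expgM; congr diag2_GL; apply/eqP;
  by rewrite eq_expg_mod_order l_order /= modn_mod modnMmr.
Qed.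

Lemma diag_pow_eq1 u : (diag_pow u == 1) = (u == (0, 0)%R).
Proof. by case: u => z w; rewrite diag2_GL_eq1 !expg_Zp_eq1 xpair_eqE. Qed.

Lemma order_diag_pow u : u != (0, 0)%R -> #[diag_pow u] = p.
Proof.
move=> u0; apply: nt_prime_order => //; last by rewrite diag_pow_eq1.
have Zp_p : inZp p = 0%R :> 'I_p by apply: val_inj; rewrite /= modnn.
by apply/eqP; rewrite diag_powX Zp_p !mulr0 diag_pow_eq1.
Qed.

Lemma diag_pow_conj u v g : diag_pow u ^ g = diag_pow v -> v = u \/ v = (u.2, u.1).
Proof.
case: u v => [z w] [z' w'] /diag2_GL_conj[[] | []] /expg_Zp_inj /= -> /expg_Zp_inj /= ->.
  by left.
by right.
Qed.

Lemma conjg_diag_pow_antidiag u : diag_pow u ^ antidiag2_GL F = diag_pow (u.2, u.1).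
Proof. exact: conjg_diag2_GL_antidiag. Qed.

Lemma cycle_diag_powZ u c :
  (u.1 * c, u.2 * c)%R != (0, 0)%R -> <[diag_pow (u.1 * c, u.2 * c)%R]> = <[diag_pow u]>.
Proof.
move=> uc0; have u0 : u != (0, 0)%R.
  by apply: contraNneq uc0 => ->; rewrite !mul0r.
apply/eqP; rewrite eqEcard -!orderE !order_diag_pow // leqnn andbT cycle_subG.
by rewrite -[c]valZpK -diag_powX mem_cycle.
Qed.

Lemma cycle_diag_pow_conjP u v : v != (0, 0)%R ->
  reflect (pair_equiv u v) (<[diag_pow v]> \in <[diag_pow u]> :^: [set: {'GL_2[F]}]).
Proof.
move=> v0; apply: (iffP imsetP) => [[g _ Ev] | [c [Ec | Ec]]].
- have : diag_pow v \in <[diag_pow u]> :^ g by rewrite -Ev cycle_id.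
  rewrite -cycleJ => /cycleP[m]; rewrite -conjXg diag_powX => /esym/diag_pow_conj[] ->.
    by exists (inZp m); left.
  by exists (inZp m); right.
- by exists 1; rewrite ?inE // conjsg1 Ec cycle_diag_powZ -?Ec.
- exists (antidiag2_GL F); rewrite ?inE // -cycleJ conjg_diag_pow_antidiag Ec.
  by rewrite (@cycle_diag_powZ (u.2, u.1) c) -?Ec.
Qed.

Definition diag_sylow : {set {'GL_2[F]}} :=
  [set diag2_GL a.1 a.2 | a in setX <[l]> <[l]>].

Lemma group_set_diag_sylow : group_set diag_sylow.
Proof.
apply/group_setP; split.
  by apply/imsetP; exists (1, 1); rewrite ?inE ?group1 //= diag2_GL1.
move=> x y /imsetP[[a b] + ->] /imsetP[[c d] + ->].
rewrite !inE /= => /andP[aL bL] /andP[cL dL].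
by rewrite diag2_GLM; apply/imsetP; exists (a * c, b * d); rewrite ?inE /= ?groupM.
Qed.

Canonical diag_sylow_group := group group_set_diag_sylow.

Lemma card_diag_sylow : #|diag_sylow| = (p ^ 2)%N.
Proof.
rewrite card_in_imset => [|[a b] [c d] _ _ /diag2_GL_inj /= [-> ->] //].
by rewrite cardsX -orderE l_order.
Qed.

Hypothesis GL_ppart : (#|'GL_2[F]|`_p = p ^ 2)%N.

Lemma subgroup_order_p_conj_diag_pow H : H \in subgroups_of_order _ p ->
  exists2 u, u != (0, 0)%R & H \in <[diag_pow u]> :^: [set: {'GL_2[F]}].
Proof.
rewrite inE => /andP[Hgrp /eqP cardH]; pose G := group Hgrp.
have sylP : p.-Sylow('GL_2[F]) diag_sylow.
  by rewrite pHallE subsetT /= card_diag_sylow GL_ppart.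
have pG : p.-group G by rewrite /pgroup /= cardH pnat_id.
have [g _ sGP] := Sylow_subJ sylP (subsetT G) pG.
have [h hG h1] : exists2 h, h \in G & h != 1.
  by apply/trivgPn; rewrite -cardG_gt1 /= cardH prime_gt1.
have := subsetP sGP h hG; rewrite mem_conjg => /imsetP[[a b]].
rewrite inE /= => /andP[/mem_cycle_Zp[z ->] /mem_cycle_Zp[w ->]] hE.
exists (z, w); first by rewrite -diag_pow_eq1 /diag_pow /= -hE conjg_eq1.
apply/imsetP; exists g; rewrite ?inE // -cycleJ /diag_pow /= -hE conjgKV.
by apply: (nt_gen_prime (G := G)); rewrite ?cardH // !inE h1.
Qed.

Section Classification.
Hypothesis p_gt2 : (2 < p)%N.
Variable S : {set 'I_p}.
Hypothesis S_reps : inv_reps S.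

Lemma cycle_diag_pow_subgroup u :
  u \in pair_reps S -> <[diag_pow u]> \in subgroups_of_order _ p.
Proof.
move=> uR; rewrite inE groupP /= -orderE order_diag_pow //.
exact: pair_reps_neq0 uR.
Qed.

Lemma cycle_diag_pow_cover H : H \in subgroups_of_order _ p ->
  exists2 u, u \in pair_reps S & H \in <[diag_pow u]> :^: [set: {'GL_2[F]}].
Proof.
case/subgroup_order_p_conj_diag_pow => w w0 Hw.
have [u uR uw] := pair_equiv_cover p_pr S_reps w0.
exists u => //; rewrite -orbitJs in Hw *; apply: orbit_trans Hw _.
by rewrite orbitJs; apply/cycle_diag_pow_conjP.
Qed.

Lemma cycle_diag_pow_rigid : {in pair_reps S &, forall u v,
  <[diag_pow u]> \in <[diag_pow v]> :^: [set: {'GL_2[F]}] -> u = v}.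
Proof.
move=> u v uR vR uv; symmetry; apply: (pair_equiv_rigid p_pr S_reps vR uR).
exact/(@cycle_diag_pow_conjP v u (pair_reps_neq0 uR)).
Qed.

Lemma diag_pow_conj_class_reps :
  conj_class_reps p [seq <[diag_pow u]> | u <- pair_reps S].
Proof.
apply: conj_class_reps_map; first exact: pair_reps_uniq.
- exact: cycle_diag_pow_subgroup.
- exact: cycle_diag_pow_cover.
- exact: cycle_diag_pow_rigid.
Qed.

Lemma card_subgroup_classes_diag_pow :
  #|subgroup_classes_of_order {'GL_2[F]} p| = ((p + 3) %/ 2)%N.
Proof.
rewrite -(size_pair_reps p_pr S_reps p_gt2); apply: card_subgroup_classes_map.
- exact: pair_reps_uniq.
- exact: cycle_diag_pow_subgroup.
- exact: cycle_diag_pow_cover.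
- exact: cycle_diag_pow_rigid.
Qed.

Lemma pair_reps_cycles :
  [seq <[diag_pow u]> | u <- pair_reps S] =
  [:: <[diag2_GL 1 l]>; <[diag2_GL l l]>; <[diag2_GL l l^-1]>]
    ++ [seq <[diag2_GL l (l ^+ k)]> | k : 'I_p <- enum S].
Proof.
rewrite /= -map_comp /diag_pow val_Zp_opp1 /= (@modn_small 1) // expg0 expg1.
by rewrite invg_expg l_order.
Qed.

End Classification.

End DiagonalSubgroups.

Lemma p_part_card_GL2 (F : finFieldType) p : prime p ->
  p %| #|F|.-1 -> ~~ (p ^ 2 %| #|F|.-1) -> ~~ (p %| #|F|.+1) ->
  #|'GL_2[F]%g|`_p = p ^ 2.
Proof.
move=> p_pr dvd_p ndvd_p2 ndvd_p1; set q := #|F| in dvd_p ndvd_p2 ndvd_p1 *.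
have q1_gt0 : 0 < q.-1.
  by rewrite lt0n; apply: contraNneq ndvd_p2 => ->; rewrite dvdn0.
have q_gt0 : 0 < q by lia.
have ndvd_pq : ~~ (p %| q).
  apply: contraL p_pr => dvd_pq.
  have : p %| 1 by rewrite -(@dvdn_addr q.-1) // addn1 prednK.
  by rewrite dvdn1 => /eqP ->.
have logn_q1 : logn p q.-1 = 1.
  by move: ndvd_p2 dvd_p; rewrite pfactor_dvdn // -[p in p %| _]expn1 pfactor_dvdn //; lia.
rewrite card_GL_2 -/q p_part !lognM ?muln_gt0 ?q1_gt0 ?q_gt0 //.
by rewrite logn_q1 !logn_coprime ?prime_coprime.
Qed.

Lemma diagGLE q (a b : {unit 'F_q}) : diagGL a b = diag2_GL a b.
Proof. by []. Qed.

Theorem mainTheorem3 (p q : nat) (lambda : {unit 'F_q})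
  (pp : prime p) (pq : prime q) (p_gt2 : (2 < p)%N) (q_gtp : (p < q)%N)
  (q_ge5 : (5 <= q)%N) (p_dvd : (p %| q.-1)%N) (p_ndvd : ~~ (p %| q.+1)%N)
  (p2_ndvd : ~~ (p ^ 2 %| q.-1)%N)
  (lambda_ord : #[lambda]%g = p) :
  (forall S : {set 'I_p}, inv_reps S ->
     conj_class_reps p
       ([:: <[diagGL 1%g lambda]>%g : {set {'GL_2(q)}};
            <[diagGL lambda lambda]>%g;
            <[diagGL lambda (lambda^-1)%g]>%g]
        ++ [seq <[diagGL lambda (lambda ^+ (nat_of_ord k))%g]>%g | k : 'I_p <- enum S]))
  /\ #|subgroup_classes_of_order {'GL_2(q)} p| = ((p + 3) %/ 2)%N.
Proof.
have [n p_eq] : exists n, p = n.+2 by exists p.-2; lia.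
move: lambda_ord; subst p => lambda_ord.
have GL_ppart : #|'GL_2['F_q]%g|`_n.+2 = n.+2 ^ 2.
  by apply: p_part_card_GL2; rewrite ?card_Fp.
split=> [S S_reps | ].
  rewrite !diagGLE -(pair_reps_cycles lambda_ord).
  exact: (diag_pow_conj_class_reps (l := lambda) pp lambda_ord GL_ppart p_gt2 S_reps).
have [S0 S0_reps] := inv_reps_exist pp.
exact: (card_subgroup_classes_diag_pow (l := lambda) pp lambda_ord GL_ppart p_gt2 S0_reps).
Qed.
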